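(* Let $S$ be a regular semigroup. The following are equivalent: (1) $I^{2}=I$ for every interior ideal $I$ of $S$; (2) $I_1\cap I_2=I_1I_2\cap I_2I_1$ for all interior ideals $I_1,I_2$ of $S$; (3) every interior ideal of $S$ is semiprime; (4) every proper interior ideal of $S$ is the intersection of the irreducible semiprime interior ideals of $S$ which contain it.
   Context: A semigroup $S$ is regular if for every $a\in S$ there is $x\in S$ with $a=axa$. A subsemigroup $I$ of $S$ (non-empty with $II\subseteq I$) is an interior ideal if $SIS\subseteq I$. For subsets $A,B$, $AB=\{ab:a\in A,b\in B\}$ and $A^2=AA$. An interior ideal $I$ is semiprime if for every interior ideal $A$ of $S$, $A^{2}\subseteq I$ implies $A\subseteq I$. It is irreducible if for all interior ideals $I_1,I_2$ of $S$, $I_1\cap I_2=I$ implies $I_1=I$ or $I_2=I$. *)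

Set Implicit Arguments.

Section Semigroups.
Variable T : Type.
Variable op : T -> T -> T.

Definition set_eq (A B : T -> Prop) : Prop := forall x, A x <-> B x.
Definition subset (A B : T -> Prop) : Prop := forall x, A x -> B x.
Definition setI (A B : T -> Prop) : T -> Prop := fun x => A x /\ B x.

Definition setmul (A B : T -> Prop) : T -> Prop :=
  fun z => exists a b, A a /\ B b /\ z = op a b.

Definition regular : Prop := forall a, exists x, a = op (op a x) a.

Definition subsemigroup (I : T -> Prop) : Prop :=
  (exists x, I x) /\ subset (setmul I I) I.

Definition interior_ideal (I : T -> Prop) : Prop :=
  subsemigroup I /\ subset (setmul (setmul (fun _ => True) I) (fun _ => True)) I.

Definition semiprime (I : T -> Prop) : Prop :=
  forall A, interior_ideal A -> subset (setmul A A) I -> subset A I.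

Definition irreducible (I : T -> Prop) : Prop :=
  forall I1 I2, interior_ideal I1 -> interior_ideal I2 ->
    set_eq (setI I1 I2) I -> set_eq I1 I \/ set_eq I2 I.

Definition proper (I : T -> Prop) : Prop := exists x, ~ I x.

Definition irr_sp_hull (I : T -> Prop) : T -> Prop :=
  fun x => forall J, interior_ideal J -> irreducible J -> semiprime J ->
             subset I J -> J x.

End Semigroups.

(* Regularity makes every interior ideal I a two-sided ideal: for a in I with
   a = a x a we get s a = (s a)(x a) in S I S and a s = (a x) a s in S I S.
   Hence a = a (x a) lies in I J whenever a lies in I and in the interior ideal
   J, so I J = I ∩ J and in particular I^2 = I; all of (1), (2) and (3) follow.
   For (4), if a is not in I, the union of all interior ideals avoiding a is
   again an interior ideal (one-sided absorption is enough for closure), it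
   contains I, it is semiprime (every set is, since A^2 = A), and it is
   irreducible because it is the largest interior ideal avoiding a. *)
From Stdlib Require Import Classical.

Set Implicit Arguments.

Section RegularSemigroup.
Variable T : Type.
Variable op : T -> T -> T.
Hypothesis assoc : forall x y z, op x (op y z) = op (op x y) z.
Hypothesis reg : regular op.

Lemma interior_ideal_mull I s a : interior_ideal op I -> I a -> I (op s a).
Proof.
  intros [_ HSIS] Ha. destruct (reg a) as [x Hx].
  assert (E : op s a = op (op s a) (op x a)).
  { rewrite Hx at 1. rewrite <- (assoc a x a), (assoc s a). reflexivity. }
  rewrite E. apply HSIS. exists (op s a), (op x a).
  split; [exists s, a; auto | auto].
Qed.

Lemma interior_ideal_mulr I s a : interior_ideal op I -> I a -> I (op a s).
Proof.
  intros [_ HSIS] Ha. destruct (reg a) as [x Hx].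
  rewrite Hx. apply HSIS. exists (op (op a x) a), s.
  split; [exists (op a x), a; auto | auto].
Qed.

Lemma setmul_sub_setI I J :
  interior_ideal op I -> interior_ideal op J ->
  subset (setmul op I J) (setI I J).
Proof.
  intros HI HJ z [a [b [Ha [Hb ->]]]]. split.
  - apply interior_ideal_mulr; assumption.
  - apply interior_ideal_mull; assumption.
Qed.

Lemma setI_sub_setmul I J :
  interior_ideal op J -> subset (setI I J) (setmul op I J).
Proof.
  intros HJ z [Iz Jz]. destruct (reg z) as [x Hx].
  exists z, (op x z). split; [exact Iz | split].
  - apply interior_ideal_mull; assumption.
  - rewrite Hx at 1. rewrite <- assoc. reflexivity.
Qed.

Lemma setmul_interior_ideal_id I :
  interior_ideal op I -> set_eq (setmul op I I) I.
Proof.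
  intros HI z; split.
  - intros Hz. apply (setmul_sub_setI HI HI Hz).
  - intros Iz. apply setI_sub_setmul; [assumption | split; assumption].
Qed.

Lemma setI_interior_ideals I1 I2 :
  interior_ideal op I1 -> interior_ideal op I2 ->
  set_eq (setI I1 I2) (setI (setmul op I1 I2) (setmul op I2 I1)).
Proof.
  intros H1 H2 z; split.
  - intros [Hz1 Hz2]. split.
    + apply setI_sub_setmul; [assumption | split; assumption].
    + apply setI_sub_setmul; [assumption | split; assumption].
  - intros [Hz _]. apply (setmul_sub_setI H1 H2 Hz).
Qed.

Lemma semiprime_regular (I : T -> Prop) : semiprime op I.
Proof.
  intros A HA HAA x Ax. apply HAA, setmul_interior_ideal_id; assumption.
Qed.

Definition max_avoiding (a : T) : T -> Prop :=
  fun x => exists J, interior_ideal op J /\ ~ J a /\ J x.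

Lemma max_avoiding_avoids a : ~ max_avoiding a a.
Proof. intros [J [_ [Ja Ja']]]. contradiction. Qed.

Lemma sub_max_avoiding J a :
  interior_ideal op J -> ~ J a -> subset J (max_avoiding a).
Proof. intros HJ Ja x Jx. exists J. auto. Qed.

Lemma max_avoiding_interior_ideal I a :
  interior_ideal op I -> ~ I a -> interior_ideal op (max_avoiding a).
Proof.
  intros HI Ia. split; [split|].
  - pose proof HI as [[[y Iy] _] _]. exists y, I. auto.
  - intros z [u [v [[J [HJ [Ja Ju]]] [_ ->]]]].
    exists J. split; [|split]; [assumption .. | apply interior_ideal_mulr; auto].
  - intros z [u [v [[s [w [_ [[J [HJ [Ja Jw]]] ->]]]] [_ ->]]]].
    exists J. split; [|split]; [assumption .. |].
    apply interior_ideal_mulr, interior_ideal_mull; assumption.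
Qed.

Lemma max_avoiding_irreducible a : irreducible op (max_avoiding a).
Proof.
  intros I1 I2 H1 H2 E.
  assert (eq_max_avoiding : forall I, interior_ideal op I -> ~ I a ->
            subset (setI I1 I2) I -> set_eq I (max_avoiding a)).
  { intros I HI Ia HI12 z; split.
    - apply sub_max_avoiding; assumption.
    - intros Mz. apply HI12, E, Mz. }
  destruct (classic (I1 a)) as [I1a | I1a].
  - right. apply eq_max_avoiding; [assumption | | intros z [_ ?]; assumption].
    intros I2a. apply (@max_avoiding_avoids a), E. split; assumption.
  - left. apply eq_max_avoiding; [assumption .. | intros z [? _]; assumption].
Qed.

Lemma irr_sp_hull_interior_ideal I :
  interior_ideal op I -> set_eq I (irr_sp_hull op I).
Proof.
  intros HI x; split.
  - intros Ix J _ _ _ IJ. apply IJ, Ix.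
  - intros Hx. apply NNPP. intros Ix.
    pose proof (@max_avoiding_interior_ideal I x HI Ix) as HM.
    apply (@max_avoiding_avoids x), (Hx (max_avoiding x)).
    + exact HM.
    + apply max_avoiding_irreducible.
    + apply semiprime_regular.
    + apply sub_max_avoiding; assumption.
Qed.

End RegularSemigroup.

Theorem mainTheorem12 (T : Type) (op : T -> T -> T)
  (assoc : forall x y z, op x (op y z) = op (op x y) z)
  (reg : regular op) :
  let P1 := forall I, interior_ideal op I -> set_eq (setmul op I I) I in
  let P2 := forall I1 I2, interior_ideal op I1 -> interior_ideal op I2 ->
              set_eq (setI I1 I2) (setI (setmul op I1 I2) (setmul op I2 I1)) in
  let P3 := forall I, interior_ideal op I -> semiprime op I in
  let P4 := forall I, interior_ideal op I -> proper I ->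
              set_eq I (irr_sp_hull op I) in
  (P1 <-> P2) /\ (P2 <-> P3) /\ (P3 <-> P4).
Proof.
  intros P1 P2 P3 P4.
  assert (h1 : P1) by exact (setmul_interior_ideal_id assoc reg).
  assert (h2 : P2) by exact (setI_interior_ideals assoc reg).
  assert (h3 : P3) by (intros I _; apply (semiprime_regular assoc reg)).
  assert (h4 : P4) by (intros I HI _; exact (irr_sp_hull_interior_ideal assoc reg HI)).
  tauto.
Qed.
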